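(* For every $\Lambda\in\mathcal{X}_d$, the set $T_\varepsilon(\Lambda)=\{t\in\mathbb{R}^{k+r-1}:a_t\Lambda\in\mathcal{S}_\varepsilon\}$ is discrete.
   Context: Let $k,r\ge1$, positive integers $m_1,\dots,m_k,n_1,\dots,n_r$, $d=\sum m_i+\sum n_j$, with fixed norms $\|\cdot\|$ on each $\mathbb{R}^{m_i},\mathbb{R}^{n_j}$, and $\mathbb{S}^l$ the unit sphere of the norm on $\mathbb{R}^l$. $\mathcal{X}_d$ is the space of unimodular lattices in $\mathbb{R}^d$. For $\varepsilon>0$, $L_\varepsilon=\{(x,y)\in(\mathbb{S}^{m_1}\times\cdots\times\mathbb{S}^{m_k}\times\mathbb{S}^{n_1}\times\cdots\times\mathbb{S}^{n_{r-1}})\times\mathbb{R}^{n_r}:\|y\|^{n_r}\le\varepsilon\}$ and $\mathcal{S}_\varepsilon$ is the set of $\Lambda\in\mathcal{X}_d$ having a primitive vector in $L_\varepsilon$. For $t\in\mathbb{R}^{k+r-1}$, $a_t=\mathrm{diag}\big(e^{t_1}I_{m_1},\dots,e^{t_k}I_{m_k},e^{-t_{k+1}}I_{n_1},\dots,e^{-t_{k+r-1}}I_{n_{r-1}},e^{(\sum_{i=1}^{r-1}n_it_{k+i}-\sum_{i=1}^km_it_i)/n_r}I_{n_r}\big)$. *)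

From HB Require Import structures.
From mathcomp Require Import all_boot all_order all_algebra.
From mathcomp Require Import all_classical all_reals all_analysis.
Set Implicit Arguments. Unset Strict Implicit. Unset Printing Implicit Defensive.
Import Order.TTheory GRing.Theory Num.Theory.
Import numFieldNormedType.Exports.
Local Open Scope classical_set_scope.
Local Open Scope ring_scope.

Section Defs.
Variable R : realType.

Definition is_norm (l : nat) (N : 'rV[R]_l -> R) : Prop :=
  [/\ forall x, N x = 0 -> x = 0,
      forall (a : R) x, N (a *: x) = `|a| * N x &
      forall x y, N (x + y) <= N x + N y].

(* Block dimensions: blocks indexed by 'I_(k + r); the first k blocks have
   dimensions m_1..m_k, the last r blocks n_1..n_r. *)
Definition dims (k r : nat) (m : 'I_k -> nat) (n : 'I_r -> nat)
  (i : 'I_(k + r)) : nat :=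
  match fintype.split i with inl a => m a | inr b => n b end.

(* d = sum m_i + sum n_j; R^d = 'rV[R]_(\sum_i dims i), block i = submxrow v i *)

Definition lattice_of (d : nat) (g : 'M[R]_d) : set 'rV[R]_d :=
  [set v | exists z : 'rV[int]_d, v = map_mx (fun x : int => x%:~R) z *m g].

Definition unimodular_lattice (d : nat) (L : set 'rV[R]_d) : Prop :=
  exists g : 'M[R]_d, `|\det g| = 1 /\ L = lattice_of g.

Definition primitive_in (d : nat) (L : set 'rV[R]_d) (v : 'rV[R]_d) : Prop :=
  [/\ L v, v != 0 &
      ~ exists w : 'rV[R]_d, exists q : nat, [/\ L w, (2 <= q)%N & v = q%:R *: w]].

Definition act (d : nat) (A : 'M[R]_d) (L : set 'rV[R]_d) : set 'rV[R]_d :=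
  [set v *m A | v in L].

(* Exponent of the diagonal entry of a_t on block i, for
   t = (tx, ty) in R^k x R^(r-1) = R^(k + r - 1). *)
Definition at_exp (k r : nat) (m : 'I_k -> nat) (n : 'I_r -> nat)
  (t : 'rV[R]_(k + r.-1)) (i : 'I_(k + r)) : R :=
  let tx := lsubmx t in
  let ty := rsubmx t in
  match fintype.split i with
  | inl a => tx 0 a
  | inr b =>
    match (insub (val b) : option 'I_(r.-1)) with
    | Some b' => - ty 0 b'
    | None =>
      ((\sum_(j < r.-1) (n (widen_ord (leq_pred r) j))%:R * ty 0 j
        - \sum_(a < k) (m a)%:R * tx 0 a) / (n b)%:R)
    end
  end.

Definition a_t (k r : nat) (m : 'I_k -> nat) (n : 'I_r -> nat)
  (t : 'rV[R]_(k + r.-1)) : 'M[R]_(\sum_(i < k + r) dims m n i) :=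
  \mxdiag_(i < k + r) ((expR (at_exp m n t i))%:M : 'M[R]_(dims m n i)).

Definition L_eps (k r : nat) (m : 'I_k -> nat) (n : 'I_r -> nat)
  (N : forall i : 'I_(k + r), 'rV[R]_(dims m n i) -> R) (eps : R)
  : set 'rV[R]_(\sum_(i < k + r) dims m n i) :=
  [set v | forall i : 'I_(k + r),
     if (val i < (k + r).-1)%N then N i (submxrow v i) = 1
     else N i (submxrow v i) ^+ (dims m n i) <= eps].

Definition S_eps (k r : nat) (m : 'I_k -> nat) (n : 'I_r -> nat)
  (N : forall i : 'I_(k + r), 'rV[R]_(dims m n i) -> R) (eps : R)
  (L : set 'rV[R]_(\sum_(i < k + r) dims m n i)) : Prop :=
  exists v, primitive_in L v /\ L_eps N eps v.

Definition T_eps (k r : nat) (m : 'I_k -> nat) (n : 'I_r -> nat)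
  (N : forall i : 'I_(k + r), 'rV[R]_(dims m n i) -> R) (eps : R)
  (L : set 'rV[R]_(\sum_(i < k + r) dims m n i)) : set 'rV[R]_(k + r.-1) :=
  [set t | S_eps N eps (act (a_t m n t) L)].

Definition discrete_set (p : nat) (T : set 'rV[R]_p) : Prop :=
  forall t : 'rV[R]_p, T t -> exists U, nbhs t U /\ T `&` U `<=` [set t].

End Defs.

From HB Require Import structures.
From mathcomp Require Import all_boot all_order all_algebra.
From mathcomp Require Import all_classical all_reals all_analysis.
From mathcomp Require Import lra zify.

Set Implicit Arguments.
Unset Strict Implicit.
Unset Printing Implicit Defensive.

Import Order.TTheory GRing.Theory Num.Theory.
Import numFieldNormedType.Exports.
Local Open Scope classical_set_scope.
Local Open Scope ring_scope.

(* Near [t0] the exponents of [a_t] are bounded, say by [E]. If [a_t] maps a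
   lattice vector [z g] into [L_eps], every block of [a_t (z g)] has norm at
   most [1 + eps], hence every block of [z g] has norm at most
   [e^E (1 + eps)]. The sum of the block norms composed with [g] is a norm on
   R^d, hence dominates the sup norm, so [z] ranges over a finite box of
   integer vectors. Finally the first [k + r - 1] blocks of [a_t (z g)] have
   norm 1, which determines [t] from [z g]. So near [t0] the set [T_eps]
   is finite. *)

Lemma mx_norm_ge_entry (R : realDomainType) p q (x : 'M[R]_(p, q)) i j :
  `|x i j| <= `|x|.
Proof. by rewrite [leRHS]mx_normrE; apply/bigmax_geP; right; exists (i, j). Qed.

Section Norms.
Variables (R : realType) (l : nat) (M : 'rV[R]_l -> R).
Hypothesis normM : is_norm M.

Lemma is_norm0 : M 0 = 0.
Proof.
have [_ Mhom _] := normM.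
by rewrite -(scale0r (0 : 'rV[R]_l)) Mhom normr0 mul0r.
Qed.

Lemma is_norm_ge0 x : 0 <= M x.
Proof.
have [_ Mhom Mtri] := normM.
have := Mtri x ((-1) *: x).
by rewrite Mhom scaleN1r subrr is_norm0 normrN normr1 mul1r; lra.
Qed.

Lemma is_norm_le_mx_norm : exists2 C, 0 <= C & forall x, M x <= C * `|x|.
Proof.
have [_ Mhom Mtri] := normM.
exists (\sum_(j < l) M (delta_mx 0 j)) => [|x].
  by apply: sumr_ge0 => j _; apply: is_norm_ge0.
rewrite {1}[x]matrix_sum_delta big_ord1 mulr_suml.
apply: (big_rec2 (fun a b => M a <= b)) => [|j a b _ IH]; first by rewrite is_norm0.
apply: le_trans (Mtri _ _) _; apply: lerD => //.
by rewrite Mhom mulrC ler_wpM2l ?is_norm_ge0 // mx_norm_ge_entry.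
Qed.

Lemma is_norm_continuous : continuous M.
Proof.
have [_ Mhom Mtri] := normM.
have [C C0 MC] := is_norm_le_mx_norm.
have Mlip x y : `|M x - M y| <= C * `|x - y|.
  rewrite ler_norml; apply/andP; split.
    have := Mtri (y - x) x; have := MC (y - x); rewrite subrK -normrN opprB.
    lra.
  by have := Mtri (x - y) y; have := MC (x - y); rewrite subrK; lra.
move=> x; apply/(@cvgrPdist_lt _ _ _ (nbhs x)) => e e0.
have eC : 0 < e / (C + 1) by apply: divr_gt0 => //; lra.
near=> y; apply: le_lt_trans (Mlip x y) _.
have : `|x - y| < e / (C + 1) by near: y; apply: cvgr_dist_lt.
rewrite ltr_pdivlMr; last lra.
by have := normr_ge0 (x - y); nra.
Unshelve. all: by end_near.
Qed.

Lemma is_norm_ge_mx_norm : exists2 c, 0 < c & forall x, c * `|x| <= M x.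
Proof.
have [M0_eq0 Mhom _] := normM.
pose S := [set x : 'rV[R]_l | `|x| = 1].
have compactMS : compact (M @` S).
  apply: continuous_compact; first exact/continuous_subspaceT/is_norm_continuous.
  apply: bounded_closed_compact; last first.
    exact: (continuous_closedP _).1 (@norm_continuous _ _) _ (@closed_eq R 1).
  by exists 1; split => // y y1 x /= ->; apply: ltW.
have MS0 : ~ (M @` S) 0.
  case=> x /= x1 /M0_eq0 x0; move: x1; rewrite /S /= x0 normr0 => /eqP.
  by rewrite eq_sym oner_eq0.
have := closed_openC (compact_closed (@Rhausdorff R) compactMS).
rewrite openE => /(_ 0 MS0) /nbhs_ex [d dMS].
exists d%:num => // x; have [->|x0] := eqVneq x 0.
  by rewrite normr0 mulr0 is_norm_ge0.
have nx0 : 0 < `|x| by rewrite normr_gt0.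
pose u := `|x|^-1 *: x.
have Su : S u.
  by rewrite /S /= normrZ normfV normr_id mulVf // normr_eq0.
have Mu : d%:num <= M u.
  rewrite leNgt; apply/negP => Mu; apply: (dMS (M u)); last by exists u.
  by rewrite -ball_normE /ball_ /= sub0r normrN ger0_norm ?is_norm_ge0.
have -> : M x = `|x| * M u.
  by rewrite /u Mhom normfV normr_id mulrA mulfV ?mul1r // normr_eq0.
by rewrite mulrC ler_wpM2l.
Qed.

End Norms.

Lemma is_norm_mulmx (R : realType) l (M : 'rV[R]_l -> R) (g : 'M[R]_l) :
  is_norm M -> g \in unitmx -> is_norm (fun x => M (x *m g)).
Proof.
move=> [M0 Mhom Mtri] gU; split=> [x /M0 xg0|a x|x y].
- by rewrite -(mulmxK gU x) xg0 mul0mx.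
- by rewrite -scalemxAl Mhom.
- by rewrite mulmxDl Mtri.
Qed.

Lemma is_norm_sum_blocks (R : realType) s (p : 'I_s -> nat)
    (N : forall i, 'rV[R]_(p i) -> R) :
  (forall i, is_norm (N i)) ->
  is_norm (fun x : 'rV_(\sum_i p i) => \sum_i N i (submxrow x i)).
Proof.
move=> normN; split=> [x|a x|x y].
- move=> /(psumr_eq0P (fun i _ => is_norm_ge0 (normN i) _)) x0.
  apply/mxrowP => i; rewrite submxrow0.
  by have [N0 _ _] := normN i; apply: N0; apply: x0.
- rewrite mulr_sumr; apply: eq_bigr => i _; have [_ Nhom _] := normN i.
  by rewrite -mul_scalar_mx -mul_submxrow mul_scalar_mx Nhom.
- rewrite -big_split; apply: ler_sum => i _; have [_ _ Ntri] := normN i.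
  by rewrite submxrowD Ntri.
Qed.

Section DiagonalFlow.
Variables (R : realType) (k r : nat) (m : 'I_k -> nat) (n : 'I_r -> nat).
Hypotheses (m_gt0 : forall a, (0 < m a)%N) (n_gt0 : forall b, (0 < n b)%N).
Local Notation V := 'rV[R]_(\sum_(i < k + r) dims m n i).

Lemma dims_gt0 i : (0 < dims m n i)%N.
Proof. by rewrite /dims; case: (fintype.split i). Qed.

Lemma submxrow_mul_a_t (t : 'rV[R]_(k + r.-1)) (w : V) i :
  submxrow (w *m a_t m n t) i = expR (at_exp m n t i) *: submxrow w i.
Proof.
by rewrite -[w in LHS]submxrowK /a_t mul_mxrow_mxdiag mxrowK mul_mx_scalar.
Qed.

Lemma at_exp_lshift (t : 'rV[R]_(k + r.-1)) a :
  at_exp m n t (lshift r a) = lsubmx t 0 a.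
Proof. by rewrite /at_exp (unsplitK (inl a : 'I_k + 'I_r)). Qed.

Lemma at_exp_rshift (t : 'rV[R]_(k + r.-1)) (b : 'I_r.-1) :
  at_exp m n t (rshift k (widen_ord (leq_pred r) b)) = - rsubmx t 0 b.
Proof. by rewrite /at_exp (unsplitK (inr _ : 'I_k + 'I_r)) /= (valK b). Qed.

Definition exp_weight : R :=
  \sum_(j < r.-1) (n (widen_ord (leq_pred r) j))%:R + \sum_(a < k) (m a)%:R.

Lemma exp_weight_ge0 : 0 <= exp_weight.
Proof. by apply: addr_ge0; apply: sumr_ge0 => *; apply: ler0n. Qed.

Lemma at_exp_norm_le (t : 'rV[R]_(k + r.-1)) i :
  `|at_exp m n t i| <= (1 + exp_weight) * `|t|.
Proof.
set w := exp_weight; have w_ge0 : 0 <= w := exp_weight_ge0.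
have t_ge0 : 0 <= `|t| by [].
have entry_le j : `|t 0 j| <= (1 + w) * `|t|.
  by apply: le_trans (mx_norm_ge_entry t 0 j) _; rewrite ler_peMl // lerDl.
rewrite /at_exp; case: (fintype.split i) => [a|b]; first by rewrite mxE.
case: insub => [b'|]; first by rewrite normrN mxE.
have weighted_sum_le p (c : 'I_p -> nat) (s : 'rV[R]_p) :
    (forall j, `|s 0 j| <= `|t|) ->
    `|\sum_j (c j)%:R * s 0 j| <= (\sum_j (c j)%:R) * `|t|.
  move=> st; apply: le_trans (ler_norm_sum _ _ _) _; rewrite mulr_suml.
  by apply: ler_sum => j _; rewrite normrM ger0_norm ?ler0n // ler_wpM2l.
set A := _ - _.
have A_le : `|A| <= w * `|t|.
  apply: le_trans (ler_normB _ _) _; rewrite mulrDl.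
  by apply: lerD; apply: weighted_sum_le => j; rewrite mxE mx_norm_ge_entry.
have nb_ge1 : 1 <= (n b)%:R :> R by rewrite ler1n n_gt0.
have wt_ge0 : 0 <= (1 + w) * `|t| by apply: mulr_ge0; lra.
rewrite normrM normfV normr_nat ler_pdivrMr ?(lt_le_trans ltr01) //.
nra.
Qed.

Variables (N : forall i, 'rV[R]_(dims m n i) -> R) (eps : R).
(* Otherwise [Set Implicit Arguments] makes the block index of [N] implicit. *)
Arguments N : clear implicits.
Hypothesis normN : forall i, is_norm (N i).

Lemma norm_submxrow_a_t t (v : V) i :
  N i (submxrow (v *m a_t m n t) i) = expR (at_exp m n t i) * N i (submxrow v i).
Proof.
have [_ Nhom _] := normN i.
by rewrite submxrow_mul_a_t Nhom gtr0_norm ?expR_gt0.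
Qed.

(* The unique [t] for which the first [k + r - 1] blocks of [v *m a_t t] have
   norm 1 (when those norms are positive). *)
Definition log_params (v : V) : 'rV[R]_(k + r.-1) :=
  row_mx (\row_a - ln (N (lshift r a) (submxrow v (lshift r a))))
    (\row_b ln (N (rshift k (widen_ord (leq_pred r) b))
                 (submxrow v (rshift k (widen_ord (leq_pred r) b))))).

Lemma L_eps_a_t_log_params t (v : V) : (0 < r)%N ->
  L_eps N eps (v *m a_t m n t) -> t = log_params v.
Proof.
move=> r_gt0 Lv; have norm_v (i : 'I_(k + r)) : (i < (k + r).-1)%N ->
    N i (submxrow v i) = expR (- at_exp m n t i).
  move=> ilt; have := Lv i; rewrite ilt norm_submxrow_a_t => norm1.
  by rewrite -[RHS]mulr1 -norm1 mulrA -expRD addNr expR0 mul1r.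
rewrite -[t]hsubmxK; congr row_mx; apply/rowP => j; rewrite [RHS]mxE.
  by rewrite norm_v ?at_exp_lshift ?expRK ?opprK //=; have := ltn_ord j; lia.
by rewrite norm_v ?at_exp_rshift ?expRK ?opprK //=; have := ltn_ord j; lia.
Qed.

Hypothesis eps_ge0 : 0 <= eps.

Lemma L_eps_block_le (v : V) i : L_eps N eps v -> N i (submxrow v i) <= 1 + eps.
Proof.
move=> /(_ i); case: ifP => _; first by move=> ->; rewrite lerDl.
move: (N i _) => y y_le; have [y_le1|y_gt1] := lerP y 1.
  by rewrite (le_trans y_le1) ?lerDl.
have := ler_eXnr (dims_gt0 i) (ltW y_gt1).
by move/le_trans/(_ y_le)/le_trans; apply; rewrite lerDr.
Qed.

Lemma L_eps_a_t_sum_le E t (v : V) :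
  (forall i, `|at_exp m n t i| <= E) -> L_eps N eps (v *m a_t m n t) ->
  \sum_i N i (submxrow v i) <= (k + r)%:R * (expR E * (1 + eps)).
Proof.
move=> exp_le Lv.
have block_le i : N i (submxrow v i) <= expR E * (1 + eps).
  have -> : N i (submxrow v i) =
      expR (- at_exp m n t i) * N i (submxrow (v *m a_t m n t) i).
    by rewrite norm_submxrow_a_t mulrA -expRD addNr expR0 mul1r.
  apply: ler_pM; rewrite ?expR_ge0 ?is_norm_ge0 ?L_eps_block_le // ler_expR.
  by have := exp_le i; rewrite ler_norml => /andP[]; lra.
apply: le_trans (ler_sum _ (fun i _ => block_le i)) _.
by rewrite sumr_const card_ord mulr_natl.
Qed.

End DiagonalFlow.

Definition int_box d K (f : {ffun 'I_d -> 'I_K.*2.+1}) : 'rV[int]_d :=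
  \row_j ((f j)%:Z - K%:Z).

Lemma int_boxP (R : realType) d K (z : 'rV[int]_d) :
  `|map_mx intr z : 'rV[R]_d| < K%:R ->
  exists f : {ffun 'I_d -> 'I_K.*2.+1}, z = int_box f.
Proof.
move=> zK; have zK_entry j : `|z 0 j| < K%:Z.
  rewrite -(ltr_int R) intr_norm; apply: le_lt_trans zK.
  by have := mx_norm_ge_entry (map_mx intr z : 'rV[R]_d) 0 j; rewrite mxE.
exists [ffun j => inord (absz (z 0 j + K%:Z))]; apply/rowP => j.
by rewrite !mxE ffunE inordK; have := zK_entry j; lia.
Qed.

Lemma discrete_set_finite_cover (R : realType) p (T : set 'rV[R]_p) :
  (forall t0, T t0 -> exists (F : finType) (f : F -> 'rV[R]_p),
     exists2 e, 0 < e & T `&` ball t0 e `<=` range f) ->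
  discrete_set T.
Proof.
move=> cover t0 Tt0; have [F [f [e e_gt0 Tf]]] := cover t0 Tt0.
pose del := \big[Num.min/e]_(x : F | f x != t0) `|f x - t0|.
have del_gt0 : 0 < del by apply: lt_bigmin => // x; rewrite normr_gt0 subr_eq0.
exists (ball t0 del); split=> [|t [Tt t_near]]; first exact: nbhsx_ballx.
have del_le_e : del <= e by apply: bigmin_le_id.
have [x _ fx_t] := Tf t (conj Tt (le_ball del_le_e t_near)).
apply/eqP/negPn/negP => t_neq; move: t_near; rewrite -ball_normE /= distrC.
by rewrite ltNge -fx_t bigmin_le_cond // fx_t.
Qed.

Theorem lemma5p1 (R : realType) (k r : nat) (m : 'I_k -> nat) (n : 'I_r -> nat)
  (N : forall i : 'I_(k + r), 'rV[R]_(dims m n i) -> R) (eps : R) :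
  (0 < k)%N -> (0 < r)%N ->
  (forall a, (0 < m a)%N) -> (forall b, (0 < n b)%N) ->
  (forall i, is_norm (N i)) ->
  0 < eps ->
  forall L : set 'rV[R]_(\sum_(i < k + r) dims m n i),
    unimodular_lattice L -> discrete_set (T_eps N eps L).
Proof.
move=> _ r_gt0 m_gt0 n_gt0 normN eps_gt0 L [g [det_g ->]].
have g_unit : g \in unitmx by rewrite unitmxE unitfE -normr_eq0 det_g oner_eq0.
have [c c_gt0 c_le] :=
  is_norm_ge_mx_norm (is_norm_mulmx (is_norm_sum_blocks normN) g_unit).
apply: discrete_set_finite_cover => t0 _.
pose E := (1 + exp_weight R m n) * (`|t0| + 1).
pose B := (k + r)%:R * (expR E * (1 + eps)).
pose K := Num.Def.archi_bound (B / c).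
exists {ffun 'I_(\sum_(i < k + r) dims m n i) -> 'I_K.*2.+1}.
exists (fun f => log_params N (map_mx intr (int_box f) *m g)), 1 => //.
move=> t [[_ [[[_ [z ->] <-] _ _] Lv]] t_near].
have exp_le i : `|at_exp m n t i| <= E.
  apply: le_trans (at_exp_norm_le m n_gt0 t i) _.
  apply: ler_wpM2l; first by rewrite addr_ge0 ?exp_weight_ge0.
  move: t_near; rewrite -ball_normE /= => t_near.
  by have := ler_normD t0 (t - t0); rewrite addrC subrK distrC; lra.
have [f z_f] : exists f : {ffun _ -> 'I_K.*2.+1}, z = int_box f.
  apply: (int_boxP (R := R)); apply: le_lt_trans (archi_boundP _); last first.
    by rewrite divr_ge0 ?(ltW c_gt0) // mulr_ge0 // mulr_ge0 ?expR_ge0 //; lra.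
  rewrite ler_pdivlMr // mulrC; apply: le_trans (c_le _) _.
  exact: (L_eps_a_t_sum_le m_gt0 n_gt0 normN (ltW eps_gt0) exp_le Lv).
by exists f => //; rewrite -z_f (L_eps_a_t_log_params normN r_gt0 Lv).
Qed.
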